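(* Let $n\ge 3$ and $\Delta,\Delta'\in\mathcal{P}_n$. If there exists $i\in\mathbb{Z}_n$ with $lab_\Delta((i,i-1))\neq lab_{\Delta'}((i,i-1))$, then $f^{(\Delta)}_{8,n}\neq f^{(\Delta')}_{8,n}$.
   Context: Cells are indexed by $\mathbb{Z}_n=\{0,\dots,n-1\}$, indices modulo $n$. Rule $8$ has local rule $r_8(x_1,x_2,x_3)=\neg x_1\wedge x_2\wedge x_3$ and global function $f_{8,n}(x)_i=r_8(x_{i-1},x_i,x_{i+1})$. An update schedule is an ordered partition $\Delta=(\Delta_1,\dots,\Delta_k)$ of $\mathbb{Z}_n$ into nonempty blocks; $\mathcal{P}_n$ is the set of them. For a block $B$ let $f^{(B)}(x)_i=f_{8,n}(x)_i$ if $i\in B$ and $x_i$ otherwise; $f^{(\Delta)}_{8,n}=f^{(\Delta_k)}\circ\cdots\circ f^{(\Delta_1)}$. (The paper states the conclusion as inequality of the transition digraphs with arcs $(x,f^{(\Delta)}_{8,n}(x))$, equivalent to inequality of the maps.) For $u,v\in\mathbb{Z}_n$ with $u\in\Delta_a$, $v\in\Delta_b$, $lab_\Delta((u,v))=\oplus$ if $b\le a$ and $\ominus$ if $a<b$. *)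

From mathcomp Require Import all_boot all_order.
Set Implicit Arguments. Unset Strict Implicit. Unset Printing Implicit Defensive.

Definition config (n : nat) := {ffun 'I_n -> bool}.

Definition r8 (x1 x2 x3 : bool) : bool := ~~ x1 && x2 && x3.

Definition f8 n (x : config n) (i : 'I_n) : bool :=
  r8 (x (ord_pred i)) (x i) (x (ordS i)).

(* Update schedules: ordered partitions (Delta_1, ..., Delta_k) of 'I_n into
   nonempty blocks, represented as a sequence of sets. *)
Definition is_schedule n (D : seq {set 'I_n}) : Prop :=
  [/\ all (fun B : {set 'I_n} => B != set0) D,
      (forall a b, a < size D -> b < size D -> a != b ->
         [disjoint nth set0 D a & nth set0 D b]) &
      (forall i : 'I_n, has (fun B : {set 'I_n} => i \in B) D)].

Definition fblock n (B : {set 'I_n}) (x : config n) : config n :=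
  [ffun i => if i \in B then f8 x i else x i].

Definition fsched n (D : seq {set 'I_n}) (x : config n) : config n :=
  foldl (fun y B => fblock B y) x D.

Definition blk n (D : seq {set 'I_n}) (u : 'I_n) : nat :=
  find (fun B : {set 'I_n} => u \in B) D.

(* label of the arc (u,v): true = (+) iff b <= a, false = (-) iff a < b *)
Definition lab n (D : seq {set 'I_n}) (u v : 'I_n) : bool :=
  blk D v <= blk D u.

(* Let a = i - 1 and start from the configuration that is 1 everywhere except
   at c = i - 2 (here n >= 3 is used).  Rule 8 only switches cells off, so c
   stays 0, and a is rewritten exactly once, at its own block.  If i is not
   updated strictly before a, then a still sees the pattern (0, 1, 1) and
   stays 1.  If i is updated strictly before a, then i sees a = 1 and
   switches off, so a later sees i = 0 and switches off too.  Hence the two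
   schedules differ at cell a. *)

From mathcomp Require Import all_boot all_order.
From mathcomp Require Import zify.

Set Implicit Arguments.
Unset Strict Implicit.
Unset Printing Implicit Defensive.

Lemma fsched_cons n (B : {set 'I_n}) S x :
  fsched (B :: S) x = fsched S (fblock B x).
Proof. by []. Qed.

Lemma fsched_cat n (S1 S2 : seq {set 'I_n}) x :
  fsched (S1 ++ S2) x = fsched S2 (fsched S1 x).
Proof. by rewrite /fsched foldl_cat. Qed.

Lemma fsched_notin n (S : seq {set 'I_n}) x j :
  (forall B, B \in S -> j \notin B) -> fsched S x j = x j.
Proof.
elim: S x => [|B S IH] x notinS //.
rewrite fsched_cons IH => [|B' B'S]; last by apply: notinS; rewrite inE B'S orbT.
by rewrite ffunE (negbTE (notinS B (mem_head _ _))).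
Qed.

Lemma fsched_le n (S : seq {set 'I_n}) x j : fsched S x j -> x j.
Proof.
elim: S x => [|B S IH] x //; rewrite fsched_cons => /IH.
by rewrite ffunE; case: ifP => // _ /andP[/andP[_ ->]].
Qed.

Lemma notin_take_blk n (S : seq {set 'I_n}) j k :
  k <= blk S j -> forall B, B \in take k S -> j \notin B.
Proof.
move=> le_k_blk B /(nthP set0) [t + <-]; rewrite size_take_min => lt_t.
have lt_t_k : t < k by lia.
rewrite nth_take //; apply/negbT/(before_find set0 (a := fun B : {set 'I_n} => j \in B)).
exact: leq_trans lt_t_k le_k_blk.
Qed.

Section BlockSequence.

Variables (n : nat) (S : seq {set 'I_n}).
Hypothesis S_disjoint : forall a b : nat, a < size S -> b < size S -> a != b ->
  [disjoint nth set0 S a & nth set0 S b].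
Hypothesis S_cover : forall j : 'I_n, has (fun B : {set 'I_n} => j \in B) S.

Lemma blk_lt_size j : blk S j < size S.
Proof. by rewrite /blk -has_find. Qed.

(* Cell j is rewritten exactly once, by its own block: earlier blocks do not
   contain it and, by disjointness, neither do later ones. *)
Lemma fsched_take_blk x j k : blk S j < k -> k <= size S ->
  fsched (take k S) x j = f8 (fsched (take (blk S j) S) x) j.
Proof.
set b := blk S j => lt_b_k le_k_size.
have j_in_b : j \in nth set0 S b := nth_find set0 (S_cover j).
have -> : take k S = take b S ++ nth set0 S b :: drop b.+1 (take k S).
  rewrite -{1}(cat_take_drop b (take k S)) take_takel; last exact: ltnW.
  by rewrite (drop_nth set0) ?nth_take // size_take_min; lia.
rewrite fsched_cat fsched_cons fsched_notin; first by rewrite ffunE j_in_b.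
move=> B /(nthP set0) [t + <-]; rewrite size_drop size_take_min => lt_t.
rewrite nth_drop nth_take; last by lia.
apply/negP => j_in_t.
have lt_bt_size : b.+1 + t < size S by lia.
have neq_b_bt : b != b.+1 + t by lia.
have /disjointFr/(_ j_in_b) := S_disjoint (blk_lt_size j) lt_bt_size neq_b_bt.
by rewrite j_in_t.
Qed.

Lemma fsched_blk x j : fsched S x j = f8 (fsched (take (blk S j) S) x) j.
Proof. by rewrite -[in LHS](take_size S) fsched_take_blk ?blk_lt_size. Qed.

Lemma fsched_pred_on (x : config n) a :
  blk S a <= blk S (ordS a) -> ~~ x (ord_pred a) -> x a -> x (ordS a) ->
  fsched S x a.
Proof.
move=> le_blk xc xa xi.
have ya : fsched (take (blk S a) S) x a = x a by apply/fsched_notin/notin_take_blk.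
have yi : fsched (take (blk S a) S) x (ordS a) = x (ordS a).
  exact/fsched_notin/notin_take_blk.
rewrite fsched_blk /f8 /r8 ya yi xa xi !andbT.
by apply: contra xc => /fsched_le.
Qed.

Lemma fsched_pred_off (x : config n) a :
  blk S (ordS a) < blk S a -> x a -> ~~ fsched S x a.
Proof.
move=> lt_blk xa.
have ya : fsched (take (blk S (ordS a)) S) x a = x a.
  exact/fsched_notin/notin_take_blk/ltnW.
rewrite fsched_blk /f8 (fsched_take_blk x lt_blk (ltnW (blk_lt_size a))).
by rewrite /f8 ordSK ya xa /r8 /= andbF.
Qed.

End BlockSequence.

Lemma val_ord_pred n (j : 'I_n) :
  val (ord_pred j) = if val j == 0 then n.-1 else (val j).-1.
Proof.
case: j => j lt_j_n /=; case: eqP => [->|nz_j]; first by rewrite modn_small; lia.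
have -> : (j + n).-1 = j.-1 + n by lia.
by rewrite modnDr modn_small; lia.
Qed.

Lemma ord_pred_neq n (j : 'I_n) : 1 < n -> ord_pred j != j.
Proof.
move=> lt1n; apply/eqP => /(congr1 val); have := ltn_ord j.
by rewrite val_ord_pred /=; case: eqP; lia.
Qed.

Lemma ord_pred2_neq n (j : 'I_n) : 2 < n -> ord_pred (ord_pred j) != j.
Proof.
move=> lt2n; apply/eqP => /(congr1 val); have := ltn_ord j.
by rewrite !val_ord_pred /=; case: (val j =P 0) => [->|_] /=; case: eqP; lia.
Qed.

Definition hole n (c : 'I_n) : config n := [ffun m => m != c].

Lemma fsched_neq_lab n (D D' : seq {set 'I_n}) (i : 'I_n) :
  3 <= n -> is_schedule D -> is_schedule D' ->
  lab D i (ord_pred i) -> ~~ lab D' i (ord_pred i) -> fsched D <> fsched D'.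
Proof.
move=> le3n [_ dD cD] [_ dD' cD']; rewrite /lab -ltnNge => le_blk lt_blk eqD.
set a := ord_pred i; set x := hole (ord_pred a).
have ia : ordS a = i by rewrite ord_predK.
have xa : x a by rewrite ffunE eq_sym ord_pred_neq //; lia.
have xi : x i by rewrite ffunE eq_sym ord_pred2_neq.
have xc : ~~ x (ord_pred a) by rewrite ffunE eqxx.
have on_D : fsched D x a by apply: (fsched_pred_on dD cD); rewrite ?ia.
have off_D' : ~~ fsched D' x a by apply: (fsched_pred_off dD' cD'); rewrite ?ia.
by move: off_D'; rewrite -eqD on_D.
Qed.

Theorem mainTheorem14 (n : nat) (D D' : seq {set 'I_n}) :
  3 <= n -> is_schedule D -> is_schedule D' ->
  (exists i : 'I_n, lab D i (ord_pred i) != lab D' i (ord_pred i)) ->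
  fsched D <> fsched D'.
Proof.
move=> le3n sD sD' [i]; case labD: (lab D i _); case labD': (lab D' i _) => // _.
  by apply: fsched_neq_lab sD sD' labD _; rewrite ?labD'.
by move=> /esym; apply: fsched_neq_lab sD' sD labD' _; rewrite ?labD.
Qed.
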